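(* Let $L$ be a sharp C-lattice and let $m\in L$ be a maximal element. Then there is no $x\in L$ with $m^2<x<m$.
   Context: A multiplicative lattice is a complete lattice $(L,\le)$ with bottom $0$ and top $1$ which is also a commutative monoid with identity $1$ such that $a(\bigvee_\alpha b_\alpha)=\bigvee_\alpha(ab_\alpha)$ for all $a,b_\alpha\in L$. An element $c$ is compact if $c\le\bigvee S$ implies $c\le\bigvee T$ for some finite $T\subseteq S$. A C-lattice is a multiplicative lattice in which $1$ is compact, the product of two compact elements is compact, and every element is a join of compact elements. A maximal element is a maximal element of $L\setminus\{1\}$. $L$ is sharp if whenever $a_1a_2\le b$ with $a_1,a_2,b\in L$, there exist $b_1,b_2\in L$ with $a_i\le b_i$ ($i=1,2$) and $b=b_1b_2$. *)

From Stdlib Require Import List.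

Section MultLattice.
Variable T : Type.
Variable le : T -> T -> Prop.
Variable sup : (T -> Prop) -> T.
Variable mul : T -> T -> T.

Definition top : T := sup (fun _ => True).
Definition bot : T := sup (fun _ => False).

Record is_complete_lattice : Prop := {
  le_refl : forall x, le x x;
  le_antisym : forall x y, le x y -> le y x -> x = y;
  le_trans : forall x y z, le x y -> le y z -> le x z;
  sup_ub : forall (S : T -> Prop) x, S x -> le x (sup S);
  sup_least : forall (S : T -> Prop) u, (forall x, S x -> le x u) -> le (sup S) u
}.

Record is_mult_lattice : Prop := {
  ml_complete : is_complete_lattice;
  ml_mulC : forall a b, mul a b = mul b a;
  ml_mulA : forall a b c, mul a (mul b c) = mul (mul a b) c;
  ml_mul1 : forall a, mul top a = a;
  ml_distr : forall a (S : T -> Prop),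
      mul a (sup S) = sup (fun y => exists b, S b /\ y = mul a b)
}.

Definition compact (c : T) : Prop :=
  forall S : T -> Prop, le c (sup S) ->
    exists l : list T, (forall x, In x l -> S x) /\ le c (sup (fun x => In x l)).

Record is_C_lattice : Prop := {
  cl_mult : is_mult_lattice;
  cl_top_compact : compact top;
  cl_mul_compact : forall a b, compact a -> compact b -> compact (mul a b);
  cl_compactly_generated : forall a, a = sup (fun c => compact c /\ le c a)
}.

Definition maximal (m : T) : Prop :=
  m <> top /\ forall x, x <> top -> le m x -> x = m.

Definition sharp : Prop :=
  forall a1 a2 b, le (mul a1 a2) b ->
    exists b1 b2, le a1 b1 /\ le a2 b2 /\ b = mul b1 b2.

Definition lt (x y : T) : Prop := le x y /\ x <> y.

End MultLattice.

Arguments top {T} sup.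
Arguments bot {T} sup.
Arguments is_complete_lattice {T} le sup.
Arguments is_mult_lattice {T} le sup mul.
Arguments compact {T} le sup c.
Arguments is_C_lattice {T} le sup mul.
Arguments maximal {T} le sup m.
Arguments sharp {T} le mul.
Arguments lt {T} le x y.

From Stdlib Require Import Classical.

(* Sharpness factors any x above m^2 as x = b1 b2 with m <= b1, b2.  By
   maximality each b_i is 1 or m, so x is one of 1, m, m^2; and none of these
   lies strictly between m^2 and m. *)

Section SharpMaximal.
Context {T : Type} (le : T -> T -> Prop) (sup : (T -> Prop) -> T).

Lemma maximal_ge (m b : T) :
  maximal le sup m -> le m b -> b = top sup \/ b = m.
Proof.
  intros [_ hmax] Hb.
  destruct (classic (b = top sup)) as [E | E]; [left | right; apply hmax]; assumption.
Qed.

Lemma maximal_not_top_le (m : T) :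
  is_complete_lattice le sup -> maximal le sup m -> ~ le (top sup) m.
Proof.
  intros hcl [hmt _] Htm. apply hmt.
  apply (le_antisym _ _ _ hcl); [apply (sup_ub _ _ _ hcl); exact I | exact Htm].
Qed.

Lemma sharp_ge_maximal_sq (mul : T -> T -> T) (m x : T) :
  is_mult_lattice le sup mul -> sharp le mul -> maximal le sup m ->
  le (mul m m) x -> x = top sup \/ x = m \/ x = mul m m.
Proof.
  intros hL hsharp hm Hx.
  destruct (hsharp m m x Hx) as [b1 [b2 [Hb1 [Hb2 ->]]]].
  destruct (maximal_ge m b1 hm Hb1) as [-> | ->];
    destruct (maximal_ge m b2 hm Hb2) as [-> | ->].
  - left. apply (ml_mul1 _ _ _ _ hL).
  - right; left. apply (ml_mul1 _ _ _ _ hL).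
  - right; left. rewrite (ml_mulC _ _ _ _ hL). apply (ml_mul1 _ _ _ _ hL).
  - right; right. reflexivity.
Qed.

End SharpMaximal.

Theorem proposition2p2 (T : Type) (le : T -> T -> Prop) (sup : (T -> Prop) -> T)
  (mul : T -> T -> T)
  (hC : is_C_lattice le sup mul) (hsharp : sharp le mul)
  (m : T) (hm : maximal le sup m) :
  ~ (exists x : T, lt le (mul m m) x /\ lt le x m).
Proof.
  intros [x [[Hsq_x Hsq_neq] [Hx_m Hx_neq]]].
  pose proof (cl_mult _ _ _ _ hC) as hL.
  destruct (sharp_ge_maximal_sq le sup mul m x hL hsharp hm Hsq_x)
    as [-> | [-> | ->]].
  - exact (maximal_not_top_le le sup m (ml_complete _ _ _ _ hL) hm Hx_m).
  - exact (Hx_neq eq_refl).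
  - exact (Hsq_neq eq_refl).
Qed.
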